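(* Let $X\subseteq\{1,\dots,n\}$ and $x\in X$. Let $D(X,x)$ be the complex with \[ D(X,x)_i=\bigoplus_{(x_0,\dots,x_i)}\mathcal M_{X,\{x,x_0,\dots,x_i\}}\qquad(i\geq 0), \] the sum over all tuples of distinct elements of $X-\{x\}$, whose differential $\delta_i$ (for $i\geq 1$) sends the $(x_0,\dots,x_i)$-summand to the $(x_0,\dots,x_{i-1})$-summand via the map $\mathcal M_{X,\{x,x_0,\dots,x_i\}}\to\mathcal M_{X,\{x,x_0,\dots,x_{i-1}\}}$ induced by the inclusions $M_{\{x,x_0,\dots,x_i\}}\subseteq M_{\{x,x_0,\dots,x_{i-1}\}}$ and $J_{X-\{x,x_0,\dots,x_i\}}\subseteq J_{X-\{x,x_0,\dots,x_{i-1}\}}$, and with augmentation $\delta_0\colon D(X,x)_0\to\mathcal B_{X,x}$ induced on each summand by $M_{\{x,x_0\}}\subseteq B_{X,x}$ and $J_{X-\{x,x_0\}}\subseteq J_{X-\{x\}}$. Then $D(X,x)\to\mathcal B_{X,x}$ is a resolution, and so is $\mathbb 1\otimes_{\mathcal P_n}D(X,x)\to\mathbb 1\otimes_{\mathcal P_n}\mathcal B_{X,x}$.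
   Context: $R$ is a commutative ring, $\delta\in R$, and $\mathcal P_n=\mathcal P_n(R,\delta)$ is the partition algebra: the free $R$-module on set partitions (''diagrams'') of $\{-n,\dots,-1,1,\dots,n\}$ (negative = left nodes, positive = right nodes), with product by stacking, taking the induced partition on outer nodes, and multiplying by $\delta$ for each component consisting only of middle nodes. $\mathbb 1$ is the trivial right module $R$ on which permutation diagrams (blocks all of the form $\{-i,j\}$) act as the identity and other diagrams as $0$. For $Z\subseteq\{1,\dots,n\}$, $J_Z$ is the left ideal spanned by diagrams in which among the right nodes labelled by $Z$ there is a singleton block or two distinct nodes in the same block. $B_{X,x}$ is the left submodule spanned by diagrams in which the right node $x$ lies in the same block as some other element of $X$, and $\mathcal B_{X,x}=B_{X,x}/(B_{X,x}\cap J_{X-\{x\}})$. For $Y\subseteq X$, $M_Y$ is the span of diagrams in which all right nodes in $Y$ lie in one block, and $\mathcal M_{X,Y}=M_Y/(M_Y\cap J_{X-Y})$. *)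

From HB Require Import structures.
From mathcomp Require Import all_boot all_order all_algebra.
Set Implicit Arguments. Unset Strict Implicit. Unset Printing Implicit Defensive.
Import GRing.Theory.
Local Open Scope ring_scope.

(** * Diagrams of the partition algebra P_n.
    Nodes: [inl i] is the left node -(i+1), [inr i] is the right node (i+1),
    for i : 'I_n.  So {1,...,n} is represented by 'I_n (shift by one). *)
Definition node (n : nat) := ('I_n + 'I_n)%type.

Definition is_diagram n (P : {set {set node n}}) : bool := partition P [set: node n].

Definition diagram n := {P : {set {set node n}} | is_diagram P}.

Definition sameblk n (d : diagram n) (a b : node n) : bool :=
  [exists B in val d, (a \in B) && (b \in B)].

(** In [comp d1 d2] the right nodes of d1 are glued to the left
    nodes of d2 ("middle" nodes); the outer nodes are the left nodes of d1 and
    the right nodes of d2.  Auxiliary node type: (0,i) outer-left, (1,i) middle,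
    (2,i) outer-right. *)
Definition tnode n := ('I_3 * 'I_n)%type.
Definition p0 : 'I_3 := @Ordinal 3 0 isT.
Definition p1 : 'I_3 := @Ordinal 3 1 isT.
Definition p2 : 'I_3 := @Ordinal 3 2 isT.

Definition emb1 n (a : node n) : tnode n :=
  match a with inl i => (p0, i) | inr i => (p1, i) end.
Definition emb2 n (a : node n) : tnode n :=
  match a with inl i => (p1, i) | inr i => (p2, i) end.
Definition outer n (a : node n) : tnode n :=
  match a with inl i => (p0, i) | inr i => (p2, i) end.

Definition glue0 n (d1 d2 : diagram n) (u v : tnode n) : bool :=
  [exists a, exists b, [&& sameblk d1 a b, emb1 a == u & emb1 b == v]] ||
  [exists a, exists b, [&& sameblk d2 a b, emb2 a == u & emb2 b == v]].
Definition glue n (d1 d2 : diagram n) : rel (tnode n) :=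
  fun u v => glue0 d1 d2 u v || glue0 d1 d2 v u.
Definition conn n (d1 d2 : diagram n) : rel (tnode n) := connect (glue d1 d2).

Definition orel n (d1 d2 : diagram n) : rel (node n) :=
  fun w w' => conn d1 d2 (outer w) (outer w').

Lemma glue_sym n (d1 d2 : diagram n) : symmetric (glue d1 d2).
Proof. by move=> u v; rewrite /glue orbC. Qed.

Lemma orel_equiv n (d1 d2 : diagram n) :
  {in [set: node n] & &, equivalence_rel (orel d1 d2)}.
Proof.
move=> x y z _ _ _; split; first exact: connect0.
have sym := sym_connect_sym (glue_sym d1 d2).
move=> xy; apply/idP/idP => H.
- by apply: connect_trans H; rewrite /conn sym.
- exact: connect_trans xy H.
Qed.

Definition comp_set n (d1 d2 : diagram n) : {set {set node n}} :=
  equivalence_partition (orel d1 d2) [set: node n].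

Lemma comp_is_diagram n (d1 d2 : diagram n) : is_diagram (comp_set d1 d2).
Proof. exact: (equivalence_partitionP (orel_equiv d1 d2)). Qed.

Definition comp n (d1 d2 : diagram n) : diagram n :=
  exist _ (comp_set d1 d2) (comp_is_diagram d1 d2).

(** number of components of the stacked picture consisting only of middle nodes *)
Definition mid n (d1 d2 : diagram n) : nat :=
  #|[set [set v | conn d1 d2 m v] | m in
      [set m : tnode n | (m.1 == p1) && [forall w, ~~ conn d1 d2 m (outer w)]]]|.

(** ** The partition algebra as the free R-module on diagrams *)
Notation palg R n := {ffun diagram n -> R}.

Definition pscale (R : pzRingType) n (r : R) (v : palg R n) : palg R n :=
  [ffun d => r * v d].

(** left multiplication by the diagram d:  d * d2 = delta^(mid) (d o d2) *)
Definition dact (R : pzRingType) (delta : R) n (d : diagram n) (v : palg R n)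
  : palg R n :=
  [ffun d' => \sum_(d2 : diagram n | comp d d2 == d') v d2 * delta ^+ mid d d2].

Definition is_perm n (d : diagram n) : bool :=
  [forall B in val d, [exists i, exists j, B == [set inl i; inr j]]].

(** the trivial module 1: permutation diagrams act by 1, others by 0 *)
Definition eps (R : pzRingType) n (d : diagram n) : R := (is_perm d)%:R.

Definition Jset n (Z : {set 'I_n}) (d : diagram n) : bool :=
  [exists B in val d,
     [exists z in Z, B == [set inr z]] ||
     [exists z1 in Z, exists z2 in Z, [&& z1 != z2, inr z1 \in B & inr z2 \in B]]].

Definition Bset n (X : {set 'I_n}) (x : 'I_n) (d : diagram n) : bool :=
  [exists B in val d, (inr x \in B) && [exists y in X, (y != x) && (inr y \in B)]].

Definition Mset n (Y : {set 'I_n}) (d : diagram n) : bool :=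
  [exists B in val d, [forall y in Y, inr y \in B]].

(** R-span of a set of diagrams (= elements supported on that set) *)
Definition spanD (R : pzRingType) n (P : pred (diagram n)) (v : palg R n) : Prop :=
  forall d, v d != 0 -> P d.

(** ** Subquotients  top / ker  of P_n (ker is a submodule of top) *)
Record subquot (R : pzRingType) n := SubQuot {
  sq_top : palg R n -> Prop;
  sq_ker : palg R n -> Prop }.

(** M_{X,Y} = M_Y / (M_Y cap J_{X-Y}) *)
Definition MX (R : pzRingType) n (X Y : {set 'I_n}) : subquot R n :=
  SubQuot (spanD (Mset Y))
          (fun v => spanD (Mset Y) v /\ spanD (Jset (X :\: Y)) v).

(** B_{X,x} = B_{X,x} / (B_{X,x} cap J_{X-{x}}) *)
Definition BX (R : pzRingType) n (X : {set 'I_n}) (x : 'I_n) : subquot R n :=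
  SubQuot (spanD (Bset X x))
          (fun v => spanD (Bset X x) v /\ spanD (Jset (X :\ x)) v).

(** balancing relations of 1 (x)_{P_n} M:  sums of  d.m - eps(d) m, m in M *)
Definition Trel (R : pzRingType) (delta : R) n (M : palg R n -> Prop)
  (v : palg R n) : Prop :=
  exists s : seq (diagram n * palg R n),
    (forall p, p \in s -> M p.2) /\
    v = \sum_(p <- s) (dact delta p.1 p.2 - pscale (eps R p.1) p.2).

(** 1 (x)_{P_n} (top/ker) = top / (ker + balancing relations) *)
Definition tensor1 (R : pzRingType) (delta : R) n (Q : subquot R n) : subquot R n :=
  SubQuot (sq_top Q)
          (fun v => exists j k, sq_ker Q j /\ Trel delta (sq_top Q) k /\ v = j + k).

(** A tuple s = (x_0,...,x_i) of distinct elements of X-{x} of size i+1 indexes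
   a summand M_{X,{x,x_0..x_i}} of D(X,x)_i; the empty tuple indexes the
   augmentation target B_{X,x} (degree -1). *)
Definition valid n (X : {set 'I_n}) (x : 'I_n) (s : seq 'I_n) : bool :=
  uniq s && all (fun y => (y \in X) && (y != x)) s.

Definition Dsummand (R : pzRingType) n (X : {set 'I_n}) (x : 'I_n) (s : seq 'I_n)
  : subquot R n :=
  if s is [::] then BX R X x else MX R X (x |: [set y in s]).

(** differential (and augmentation, for s = [::]): the (s ++ [y])-summand is
    sent to the s-summand by the map induced by the identity of P_n *)
Definition dF (R : pzRingType) n (X : {set 'I_n}) (x : 'I_n)
  (f : seq 'I_n -> palg R n) (s : seq 'I_n) : palg R n :=
  \sum_(y : 'I_n | [&& y \in X, y != x & y \notin s]) f (rcons s y).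

(** elements of the k-th term (k = size of indexing tuples) of the augmented
    complex: an element of the direct sum, given by representatives *)
Definition chain (R : pzRingType) n (X : {set 'I_n}) (x : 'I_n)
  (S : seq 'I_n -> subquot R n) (k : nat) (f : seq 'I_n -> palg R n) : Prop :=
  (forall t, valid X x t -> size t = k -> sq_top (S t) (f t)) /\
  (forall t, ~~ (valid X x t && (size t == k)) -> f t = 0).

(** exactness of the augmented complex at every spot (including surjectivity
    of the augmentation, k = 0) *)
Definition aug_exact (R : pzRingType) n (X : {set 'I_n}) (x : 'I_n)
  (S : seq 'I_n -> subquot R n) : Prop :=
  forall (k : nat) (f : seq 'I_n -> palg R n),
    chain X x S k f ->
    (forall s, valid X x s -> (size s).+1 = k -> sq_ker (S s) (dF X x f s)) ->
    exists g, chain X x S k.+1 g /\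
      (forall t, valid X x t -> size t = k -> sq_ker (S t) (f t - dF X x g t)).

(* For a fixed diagram d let A be the set of y in X - {x} lying in the block
   of the right node x.  All maps of D(X,x) -> B_{X,x} are induced by the
   identity of P_n and every term is a span of diagrams modulo a span of
   diagrams, so the complex splits diagram by diagram.  The d-part of the
   t-summand survives only if t enumerates a subset of A, and it is killed
   by J unless at most one element of A is missing from t; so d contributes
   only in the two degrees |A| - 1 and |A| - 2, where the differential maps
   the orderings of A bijectively onto their prefixes.  This yields
   exactness, with an explicit homotopy.

   After tensoring with the trivial module everything vanishes: each of
   these diagrams has two right nodes in one block, hence factors as u . m
   with u not a permutation diagram, no closed components, and m spanning
   the same module; so d = u m - eps(u) m is a balancing relation. *)

From Pilot Require Import Defs.
From HB Require Import structures.
From mathcomp Require Import all_boot all_order all_algebra.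
(* Re-imported so that [comp] is diagram stacking, not ssrfun's composition. *)
Import Defs.
Set Implicit Arguments. Unset Strict Implicit. Unset Printing Implicit Defensive.
Import GRing.Theory.

Section Blocks.
Variable n : nat.
Implicit Types (d : diagram n) (a b c : node n).

Lemma diagram_trivIset d : trivIset (val d).
Proof. exact: partition_trivIset (valP d). Qed.

Lemma mem_cover_diagram d a : a \in cover (val d).
Proof. by rewrite (cover_partition (valP d)) inE. Qed.

Lemma sameblkE d a b : sameblk d a b = (b \in pblock (val d) a).
Proof.
apply/existsP/idP => [[B /and3P[dB aB bB]]|ab].
  by rewrite (def_pblock (diagram_trivIset d) dB aB).
exists (pblock (val d) a).
by rewrite pblock_mem ?mem_cover_diagram // mem_pblock mem_cover_diagram ab.
Qed.

Lemma sameblk_refl d a : sameblk d a a.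
Proof. by rewrite sameblkE mem_pblock mem_cover_diagram. Qed.

Lemma sameblk_sym d a b : sameblk d a b = sameblk d b a.
Proof. by rewrite !sameblkE -!eq_pblock ?mem_cover_diagram ?diagram_trivIset // eq_sym. Qed.

Lemma sameblk_trans d a b c : sameblk d a b -> sameblk d b c -> sameblk d a c.
Proof. by rewrite !sameblkE -!eq_pblock ?mem_cover_diagram ?diagram_trivIset // => /eqP->. Qed.

Lemma sameblk_comap_equiv d (f : node n -> node n) :
  {in [set: node n] & &, equivalence_rel (fun a b => sameblk d (f a) (f b))}.
Proof.
move=> a b c _ _ _; split=> [|ab]; first exact: sameblk_refl.
apply/idP/idP => [|/(sameblk_trans ab)//].
by apply: sameblk_trans; rewrite sameblk_sym.
Qed.

Lemma equivalence_partition_sameblk d :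
  equivalence_partition (sameblk d) [set: node n] = val d.
Proof.
rewrite -[RHS](equivalence_partition_pblock (valP d)).
by apply: eq_imset => a; apply/setP => b; rewrite !inE sameblkE.
Qed.

Definition diagram_of (r : rel (node n))
  (r_equiv : {in [set: node n] & &, equivalence_rel r}) : diagram n :=
  exist _ (equivalence_partition r [set: node n]) (equivalence_partitionP r_equiv).

Lemma sameblk_diagram_of r r_equiv a b : sameblk (@diagram_of r r_equiv) a b = r a b.
Proof. by rewrite sameblkE pblock_equivalence_partition. Qed.

Definition same_right_blocks d d' :=
  forall y1 y2 : 'I_n, sameblk d (inr y1) (inr y2) = sameblk d' (inr y1) (inr y2).

Lemma perm_left_block d i : is_perm d ->
  exists j, forall a, sameblk d (inl i) a = (a == inl i) || (a == inr j).
Proof.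
move=> /forall_inP/(_ _ (pblock_mem (mem_cover_diagram d (inl i)))).
move=> /existsP[i1 /existsP[j /eqP Bij]].
have := mem_pblock (val d) (inl i); rewrite mem_cover_diagram Bij !inE.
case/orP=> [/eqP[ii1]|//]; exists j => a.
by rewrite sameblkE Bij !inE ii1.
Qed.

Lemma perm_left_mate d i : is_perm d -> exists j, sameblk d (inl i) (inr j).
Proof. by case/(perm_left_block i) => j dij; exists j; rewrite dij eqxx orbT. Qed.

Lemma perm_left_inj d i j : is_perm d -> sameblk d (inl i) (inl j) -> i = j.
Proof. by case/(perm_left_block i) => k ->; rewrite orbF => /eqP[]. Qed.

End Blocks.

Section Stacking.
Variable n : nat.
Implicit Types (d u m : diagram n) (a b : node n).

Lemma conn_sym u m s t : conn u m s t = conn u m t s.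
Proof. exact: (sym_connect_sym (glue_sym u m)). Qed.

Lemma conn_refl u m : reflexive (conn u m).
Proof. exact: connect0. Qed.

Lemma conn_trans u m s t v : conn u m s t -> conn u m t v -> conn u m s v.
Proof. exact: connect_trans. Qed.

Lemma conn_emb1 u m a b : sameblk u a b -> conn u m (emb1 a) (emb1 b).
Proof.
move=> ab; apply/connect1/orP; left; apply/orP; left.
by apply/existsP; exists a; apply/existsP; exists b; rewrite ab !eqxx.
Qed.

Lemma conn_emb2 u m a b : sameblk m a b -> conn u m (emb2 a) (emb2 b).
Proof.
move=> ab; apply/connect1/orP; left; apply/orP; right.
by apply/existsP; exists a; apply/existsP; exists b; rewrite ab !eqxx.
Qed.

Section Retraction.
Variables (u m d : diagram n) (phi : tnode n -> node n).
Hypothesis phi_emb1 : forall a b, sameblk u a b -> sameblk d (phi (emb1 a)) (phi (emb1 b)).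
Hypothesis phi_emb2 : forall a b, sameblk m a b -> sameblk d (phi (emb2 a)) (phi (emb2 b)).

Lemma sameblk_conn s t : conn u m s t -> sameblk d (phi s) (phi t).
Proof.
have glue0_sameblk v w : glue0 u m v w -> sameblk d (phi v) (phi w).
  by case/orP=> /existsP[a /existsP[b /and3P[ab /eqP<- /eqP<-]]];
    [exact: phi_emb1 | exact: phi_emb2].
case/connectP=> p; elim: p s => [|v p IHp] s /=; first by move=> _ ->; exact: sameblk_refl.
case/andP=> /orP[|] /glue0_sameblk sv /IHp vt /vt; first exact: sameblk_trans.
by apply: sameblk_trans; rewrite sameblk_sym.
Qed.

Lemma comp_eq_retract :
  (forall w, phi (outer w) = w) ->
  (forall w w', sameblk d w w' -> conn u m (outer w) (outer w')) ->
  comp u m = d.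
Proof.
move=> phi_outer d_conn; apply: val_inj; rewrite /= /comp_set -equivalence_partition_sameblk.
apply: eq_imset => a; apply/setP => b; rewrite !inE.
by apply/idP/idP => [/sameblk_conn|/d_conn //]; rewrite !phi_outer.
Qed.

End Retraction.

Lemma mid_eq0 u m : (forall i, exists w, conn u m (p1, i) (outer w)) -> mid u m = 0.
Proof.
move=> mid_outer; apply/eqP; rewrite cards_eq0 imset_eq0; apply/eqP/setP => [[q i]].
rewrite !inE /=; case: eqP => //= ->.
by have [w iw] := mid_outer i; apply/negP => /forallP/(_ w); rewrite iw.
Qed.

End Stacking.

Section Factorization.
Variable n : nat.
Implicit Types (d u m : diagram n) (a b w : node n).

Definition strand a : 'I_n := match a with inl i | inr i => i end.

Definition proj2 (t : tnode n) : node n := if t.1 == p2 then inr t.2 else inl t.2.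

Lemma proj2_emb2 a : proj2 (emb2 a) = a.
Proof. by case: a. Qed.

Lemma factor_merged_left d i j : i != j -> sameblk d (inl i) (inl j) ->
  exists u, [/\ ~~ is_perm u, comp u d = d & mid u d = 0].
Proof.
move=> ij dij; pose u := diagram_of (sameblk_comap_equiv d (fun a => inl (strand a))).
have uE a b : sameblk u a b = sameblk d (inl (strand a)) (inl (strand b)).
  exact: sameblk_diagram_of.
have outer_emb2 w : conn u d (outer w) (emb2 w).
  case: w => k; last exact: conn_refl.
  by apply: (@conn_emb1 _ _ _ (inl k) (inr k)); rewrite uE sameblk_refl.
exists u; split.
- apply/negP => /perm_left_inj u_inj; move/eqP: ij; apply.
  by apply: u_inj; rewrite uE.
- apply: (@comp_eq_retract _ _ _ _ proj2) => [[a|a] [b|b]|a b|[]//|w w' dww'].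
  + 1-4: by rewrite uE.
  + by rewrite !proj2_emb2.
  apply: conn_trans (outer_emb2 w) _; apply: conn_trans (conn_emb2 u dww') _.
  by rewrite conn_sym.
- by apply: mid_eq0 => k; exists (inl k); rewrite conn_sym; apply: outer_emb2 (inl k).
Qed.

Definition cut_strand (i : 'I_n) : rel (node n) :=
  fun a b => (a == b) || (strand a == strand b) && (strand a != i).

Lemma cut_strand_equiv i : {in [set: node n] & &, equivalence_rel (cut_strand i)}.
Proof.
move=> a b c _ _ _; rewrite /cut_strand; split=> [|/orP[/eqP<-//|/andP[/eqP ab ai]]].
  by rewrite eqxx.
have strand_eq e : e == c -> strand e == strand c by move/eqP->.
by rewrite -ab ai !andbT !orb_idl // => /strand_eq; rewrite ?ab.
Qed.

Definition relabel_left (i j : 'I_n) w := if w == inl i then inl j else w.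

Lemma factor_isolated_left d i j : i != j ->
  (forall w, sameblk d (inl i) w -> w = inl i) ->
  exists u m, [/\ ~~ is_perm u, comp u m = d, mid u m = 0 &
    same_right_blocks m d].
Proof.
move=> ij i_isolated.
pose u := diagram_of (cut_strand_equiv i).
pose m := diagram_of (sameblk_comap_equiv d (relabel_left i j)).
have uE a b : sameblk u a b = cut_strand i a b by exact: sameblk_diagram_of.
have mE a b : sameblk m a b = sameblk d (relabel_left i j a) (relabel_left i j b).
  exact: sameblk_diagram_of.
have relabel_id w : w != inl i -> relabel_left i j w = w by rewrite /relabel_left => /negbTE->.
have not_inl_i w w' : sameblk d w w' -> w != inl i -> w' != inl i.
  move=> dww' wi; apply: contraNneq wi => w'i.
  by apply/eqP/i_isolated; rewrite sameblk_sym -w'i.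
have outer_emb2 w : w != inl i -> conn u m (outer w) (emb2 w).
  case: w => k ki; last exact: conn_refl.
  apply: (@conn_emb1 _ _ _ (inl k) (inr k)); rewrite uE /cut_strand /=.
  by rewrite eqxx; apply: contra_neq ki => ->.
exists u, m; split.
- apply/negP => /(perm_left_mate i)[b].
  by rewrite uE /cut_strand /= eqxx andbF.
- pose phi t := if t.1 == p0 then inl t.2 else relabel_left i j (proj2 t).
  have phi_emb1 a : strand a != i -> phi (emb1 a) = inl (strand a).
    by case: a => k //= ki; rewrite /phi /= relabel_id //; apply: contra_neq ki => -[].
  apply: (@comp_eq_retract _ _ _ _ phi) => [a b|a b|[]//|w w' dww'].
  + rewrite uE => /orP[/eqP->|/andP[/eqP ab ai]]; first exact: sameblk_refl.
    by rewrite !phi_emb1 -?ab ?sameblk_refl.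
  + by rewrite mE; case: a; case: b.
  have [wi|wi] := eqVneq w (inl i).
    by rewrite (i_isolated w') -?wi ?conn_refl.
  apply: conn_trans (outer_emb2 w wi) _.
  apply: conn_trans (_ : conn u m (emb2 w) (emb2 w')) _.
    by apply: conn_emb2; rewrite mE !relabel_id // (not_inl_i w).
  by rewrite conn_sym outer_emb2 // (not_inl_i w).
- apply: mid_eq0 => k; have [->|ki] := eqVneq k i; last first.
    by exists (inl k); rewrite conn_sym outer_emb2 //; apply: contra_neq ki => -[].
  have ji : inl j != inl i :> node n by apply: contra_neq ij => -[->].
  exists (inl j); apply: conn_trans (_ : conn u m (emb2 (inl i)) (emb2 (inl j))) _.
    by apply: conn_emb2; rewrite mE (relabel_id _ ji) /relabel_left eqxx sameblk_refl.
  by rewrite conn_sym outer_emb2.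
- by move=> y1 y2; rewrite mE.
Qed.

Lemma right_blocks_distinct d :
  (forall i j, sameblk d (inl i) (inl j) -> i = j) ->
  (forall i, exists j, sameblk d (inl i) (inr j)) ->
  forall y1 y2, sameblk d (inr y1) (inr y2) -> y1 = y2.
Proof.
move=> left_inj /fin_all_exists[f fP] y1 y2 dy.
have f_inj : injective f.
  move=> i j fij; apply: left_inj; apply: sameblk_trans (fP i) _.
  by rewrite fij sameblk_sym fP.
have [g fK gK] := injF_bij f_inj.
suff: g y1 = g y2 by move/(congr1 f); rewrite !gK.
apply: left_inj; apply: sameblk_trans (fP _) _; rewrite gK.
by apply: sameblk_trans dy _; rewrite sameblk_sym -{2}(gK y2) fP.
Qed.

Lemma factor_through_nonperm d y1 y2 : y1 != y2 -> sameblk d (inr y1) (inr y2) ->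
  exists u m, [/\ ~~ is_perm u, comp u m = d, mid u m = 0 &
    same_right_blocks m d].
Proof.
move=> y12 dy.
have [/existsP[i /existsP[j /andP[ij dij]]]|no_merge] :=
  boolP [exists i, exists j, (i != j) && sameblk d (inl i) (inl j)].
  by have [u [? ? ?]] := factor_merged_left ij dij; exists u, d.
have left_inj i j : sameblk d (inl i) (inl j) -> i = j.
  move=> dij; apply/eqP; apply: contraNT no_merge => ij.
  by apply/existsP; exists i; apply/existsP; exists j; rewrite ij.
have [/existsP[i /forallP i_isolated]|has_mates] :=
  boolP [exists i, [forall b, ~~ sameblk d (inl i) (inr b)]].
  apply: (@factor_isolated_left _ i (if i == y1 then y2 else y1)).
    by case: (eqVneq i y1) => [->|].
  by case=> k dik; [rewrite (left_inj _ _ dik) | move: (i_isolated k); rewrite dik].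
have left_mates i : exists j, sameblk d (inl i) (inr j).
  by move/existsPn/(_ i)/forallPn: has_mates => [j]; rewrite negbK; exists j.
by move/eqP: y12; rewrite (right_blocks_distinct left_inj left_mates dy).
Qed.

End Factorization.

Section Balancing.
Variables (R : pzRingType) (delta : R) (n : nat).
Implicit Types (d u m : diagram n) (v : palg R n).
Local Open Scope ring_scope.

Definition dvec m : palg R n := [ffun d => (d == m)%:R].

Lemma palg_dvec_sum v : v = \sum_d pscale (v d) (dvec d).
Proof.
apply/ffunP => d; rewrite sum_ffunE (bigD1 d) //= big1 => [|d' d'd].
  by rewrite !ffunE eqxx mulr1 addr0.
by rewrite !ffunE eq_sym (negbTE d'd) mulr0.
Qed.

Lemma pscale0 v : pscale 0 v = 0.
Proof. by apply/ffunP => d; rewrite !ffunE mul0r. Qed.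

Lemma spanD_dvec (P : pred (diagram n)) m c : P m -> spanD P (pscale c (dvec m)).
Proof. by move=> Pm d; rewrite !ffunE; have [-> //|_] := eqVneq d m; rewrite mulr0 eqxx. Qed.

Lemma dact_dvec u m c :
  mid u m = 0%N -> dact delta u (pscale c (dvec m)) = pscale c (dvec (comp u m)).
Proof.
move=> mid0; apply/ffunP => d; rewrite !ffunE big_mkcond (bigD1 m) //= big1 => [|m' m'm].
  by rewrite !ffunE eqxx mid0 expr0 !mulr1 addr0 eq_sym; case: eqP; rewrite ?mulr1 ?mulr0.
by rewrite !ffunE (negbTE m'm) mulr0 mul0r; case: ifP.
Qed.

Lemma Trel0 (M : palg R n -> Prop) : Trel delta M 0.
Proof. by exists [::]; rewrite big_nil. Qed.

Lemma TrelD (M : palg R n -> Prop) v w :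
  Trel delta M v -> Trel delta M w -> Trel delta M (v + w).
Proof.
move=> [s [sM ->]] [t [tM ->]]; exists (s ++ t); rewrite big_cat; split=> // p.
by rewrite mem_cat => /orP[/sM|/tM].
Qed.

Lemma Trel_nonperm (M : palg R n -> Prop) u m c : ~~ is_perm u -> mid u m = 0%N ->
  M (pscale c (dvec m)) -> Trel delta M (pscale c (dvec (comp u m))).
Proof.
move=> u_nonperm mid0 Mm; exists [:: (u, pscale c (dvec m))].
split=> [p /[!inE]/eqP-> //|]; rewrite big_seq1 /= dact_dvec // /eps (negbTE u_nonperm).
by rewrite pscale0 subr0.
Qed.

Lemma Trel_spanD (P : pred (diagram n)) v :
  (forall d, P d -> exists y1 y2, y1 != y2 /\ sameblk d (inr y1) (inr y2)) ->
  (forall d d', same_right_blocks d' d -> P d -> P d') ->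
  spanD P v -> Trel delta (spanD P) v.
Proof.
move=> P_merged P_right Pv; rewrite [v]palg_dvec_sum.
apply: (big_ind (Trel delta (spanD P))); [exact: Trel0 | exact: TrelD | move=> d _].
have [->|vd] := eqVneq (v d) 0.
  by rewrite pscale0; exact: Trel0.
have [y1 [y2 [y12 dy]]] := P_merged d (Pv d vd).
have [u [m [u_nonperm umd mid0 md]]] := factor_through_nonperm y12 dy.
rewrite -umd; apply: Trel_nonperm => //; apply/spanD_dvec/(P_right _ _ md).
exact: Pv.
Qed.

End Balancing.

Section Resolution.
Variables (R : comPzRingType) (n : nat) (X : {set 'I_n}) (x : 'I_n).
Implicit Types (d : diagram n) (s t : seq 'I_n) (y z w : 'I_n) (Z : {set 'I_n}).
Local Open Scope ring_scope.

Definition xmate d y := sameblk d (inr x) (inr y).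

Definition xmates d := [set y in X | (y != x) && xmate d y].

Definition Xminus t := X :\: (x |: [set y in t]).

Definition top_diag t d :=
  if t is [::] then Bset X x d else Mset (x |: [set y in t]) d.

Lemma mem_Xminus t z : (z \in Xminus t) = [&& z \in X, z != x & z \notin t].
Proof. by rewrite !inE negb_or andbC andbA. Qed.

Lemma valid_rconsE s w :
  valid X x (rcons s w) = valid X x s && [&& w \in X, w != x & w \notin s].
Proof.
rewrite /valid rcons_uniq all_rcons.
by case: (w \notin s) (uniq s) (w \in X) (w != x) (all _ s) => [] [] [] [] [].
Qed.

Lemma card_valid t : valid X x t -> #|[set y in t]| = size t.
Proof. by case/andP=> t_uniq _; rewrite cardsE; apply/card_uniqP. Qed.

Lemma Dsummand_top t : sq_top (Dsummand R X x t) = spanD (top_diag t).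
Proof. by case: t. Qed.

Lemma Dsummand_ker t v :
  sq_ker (Dsummand R X x t) v <-> spanD (top_diag t) v /\ spanD (Jset (Xminus t)) v.
Proof.
case: t => //; rewrite /Xminus (_ : x |: [set y in [::]] = [set x]) //.
by apply/setP => z; rewrite !inE orbF.
Qed.

Lemma xmate_block d B z : B \in val d -> inr x \in B -> inr z \in B -> xmate d z.
Proof. by move=> dB xB zB; apply/existsP; exists B; rewrite dB xB zB. Qed.

Lemma block_xmate d B z : B \in val d -> inr z \in B -> xmate d z -> inr x \in B.
Proof.
move=> dB zB; rewrite /xmate sameblk_sym sameblkE.
by rewrite (def_pblock (diagram_trivIset d) dB zB).
Qed.

Lemma xmate_pblock d z : xmate d z = (inr z \in pblock (val d) (inr x)).
Proof. exact: sameblkE. Qed.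

Lemma top_diag_xmates t d : valid X x t ->
  top_diag t d = ([set y in t] \subset xmates d) && (xmates d != set0).
Proof.
case/andP=> _ /allP t_ok; have x_blk := pblock_mem (mem_cover_diagram d (inr x)).
have x_in := mem_pblock (val d) (inr x); rewrite mem_cover_diagram in x_in.
case: t t_ok => [_|y t t_ok] /=.
  rewrite sub0set; apply/existsP/set0Pn => [|[z]].
    case=> B /and3P[dB xB /exists_inP[z zX /andP[zx zB]]].
    by exists z; rewrite !inE zX zx (xmate_block dB).
  rewrite !inE => /and3P[zX zx xz]; exists (pblock (val d) (inr x)).
  by rewrite x_blk x_in; apply/exists_inP; exists z; rewrite // zx -xmate_pblock.
apply/existsP/andP => [[B /andP[dB /forall_inP yt_B]]|[/subsetP t_sub _]].
  have t_sub : [set z in y :: t] \subset xmates d.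
    apply/subsetP => z; rewrite !inE => zt; have /andP[-> ->] := t_ok z zt.
    by apply: (xmate_block dB); apply: yt_B; rewrite !inE ?eqxx ?zt ?orbT.
  by split=> //; apply/set0Pn; exists y; apply/(subsetP t_sub); rewrite !inE eqxx.
exists (pblock (val d) (inr x)); rewrite x_blk; apply/forall_inP => z.
rewrite !inE => /orP[/eqP->//|zt].
by have := t_sub z; rewrite -xmate_pblock !inE zt => /(_ isT)/and3P[].
Qed.

Lemma Jset_two_xmates Z d z1 z2 : z1 != z2 -> z1 \in Z -> z2 \in Z ->
  xmate d z1 -> xmate d z2 -> Jset Z d.
Proof.
move=> z12 z1Z z2Z d1 d2; apply/existsP; exists (pblock (val d) (inr x)).
rewrite pblock_mem ?mem_cover_diagram //=; apply/orP; right.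
apply/exists_inP; exists z1 => //; apply/exists_inP; exists z2 => //.
by rewrite z12 -!xmate_pblock d1 d2.
Qed.

Lemma Jset_setD1 Z d w : Jset Z d -> x \notin Z -> xmate d w ->
  (forall z, z \in Z -> xmate d z -> z = w) -> Jset (Z :\ w) d.
Proof.
move=> /exists_inP[B dB ZB] xZ dw w_uniq; apply/exists_inP; exists B => //.
case/orP: ZB => [/exists_inP[z zZ /eqP Bz]|/exists_inP[z1 z1Z /exists_inP[z2 z2Z]]].
  have [zw|zw] := eqVneq z w.
    have := block_xmate dB _ dw; rewrite Bz -zw !inE eqxx => /(_ isT) /eqP[xz].
    by rewrite xz zZ in xZ.
  by apply/orP; left; apply/exists_inP; exists z; rewrite ?inE ?zw ?Bz.
case/and3P=> z12 z1B z2B; apply/orP; right.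
have other_xmate z z' : inr z \in B -> inr z' \in B -> z = w -> xmate d z'.
  by move=> zB z'B zw; apply: (xmate_block dB (block_xmate dB zB _) z'B); rewrite zw.
apply/exists_inP; exists z1.
  rewrite !inE z1Z andbT; apply: contra_neq z12 => z1w.
  by rewrite z1w (w_uniq z2 z2Z (other_xmate _ _ z1B z2B z1w)).
apply/exists_inP; exists z2; last by rewrite z12 z1B z2B.
rewrite !inE z2Z andbT; apply: contra_neq z12 => z2w.
by rewrite z2w (w_uniq z1 z1Z (other_xmate _ _ z2B z1B z2w)).
Qed.

Lemma sub_xmates t d : valid X x t -> ([set y in t] \subset xmates d) = all (xmate d) t.
Proof.
case/andP=> _ /allP t_ok; apply/subsetP/allP => [t_sub y yt|t_xm y].
  by have := t_sub y; rewrite !inE yt => /(_ isT)/and3P[].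
by rewrite !inE => yt; have /andP[-> ->] := t_ok y yt; rewrite t_xm.
Qed.

Lemma Xminus_rcons s w : Xminus (rcons s w) = Xminus s :\ w.
Proof.
apply/setP => z; rewrite in_setD1 !mem_Xminus mem_rcons inE negb_or.
by case: (z == w); rewrite ?andbF //= andbC -!andbA.
Qed.

Lemma Jset_many_xmates t d : valid X x t -> [set y in t] \subset xmates d ->
  ((size t).+1 < #|xmates d|)%N -> Jset (Xminus t) d.
Proof.
move=> vt t_sub many.
have /card_gt1P[z1 [z2 [z1_new z2_new z12]]] : (1 < #|xmates d :\: [set y in t]|)%N.
  by rewrite cardsDS // card_valid // ltn_subRL addn1.
have new_xmate z : z \in xmates d :\: [set y in t] -> (z \in Xminus t) && xmate d z.
  by rewrite mem_Xminus !inE; case: (z \in t); case: (z \in X); case: (z == x).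
have /andP[z1X d1] := new_xmate _ z1_new; have /andP[z2X d2] := new_xmate _ z2_new.
exact: Jset_two_xmates z12 z1X z2X d1 d2.
Qed.

Section Chains.
Variables (k : nat) (f : seq 'I_n -> palg R n).
Hypothesis f_chain : chain X x (Dsummand R X x) k f.

Lemma chain_support t d : valid X x t -> size t = k -> f t d != 0 -> top_diag t d.
Proof. by move=> vt st; have := f_chain.1 t vt st; rewrite Dsummand_top; apply. Qed.

Lemma dF_full s w d : valid X x (rcons s w) -> size (rcons s w) = k ->
  xmates d = [set y in rcons s w] -> dF X x f s d = f (rcons s w) d.
Proof.
rewrite valid_rconsE => /andP[vs sw] ssw full.
rewrite /dF sum_ffunE (bigD1 w) //= big1 ?addr0 // => y /andP[sy yw].
apply/eqP; apply: contraR yw => fy.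
have vsy : valid X x (rcons s y) by rewrite valid_rconsE vs.
have ssy : size (rcons s y) = k by rewrite size_rcons -ssw size_rcons.
have := chain_support vsy ssy fy; rewrite top_diag_xmates // => /andP[/subsetP y_xm _].
have := y_xm y; rewrite full !inE !mem_rcons mem_head inE => /(_ isT).
by case/and3P: sy => _ _ /negbTE->; rewrite orbF.
Qed.

Hypothesis f_cycle : forall s, valid X x s -> (size s).+1 = k ->
  sq_ker (Dsummand R X x s) (dF X x f s).

Lemma Jset_full_xmates t d : valid X x t -> size t = k ->
  xmates d = [set y in t] -> f t d != 0 -> Jset (Xminus t) d.
Proof.
move=> vt st full ftd; have := chain_support vt st ftd.
rewrite top_diag_xmates // full; case/lastP: t vt st full ftd => [|s w] vt st full ftd.
  by rewrite (_ : [set y in [::]] = set0) ?eqxx ?andbF //; apply/setP => y; rewrite !inE.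
move=> _; move: (vt); rewrite valid_rconsE => /andP[vs /and3P[wX wx ws]].
have ss : (size s).+1 = k by rewrite -st size_rcons.
have [_ /(_ d)] := (Dsummand_ker s _).1 (f_cycle vs ss).
rewrite (dF_full vt st full) => /(_ ftd) J; rewrite Xminus_rcons.
apply: Jset_setD1 J _ _ _; first by rewrite mem_Xminus eqxx andbF.
  have : w \in [set y in rcons s w] by rewrite inE mem_rcons mem_head.
  by rewrite -full !inE => /and3P[].
move=> z; rewrite mem_Xminus => /and3P[zX zx zs] dz.
have : z \in xmates d by rewrite !inE zX zx dz.
by rewrite full !inE mem_rcons inE (negbTE zs) orbF => /eqP.
Qed.

End Chains.

(* A contracting homotopy, diagram by diagram: d only occurs in the summands
   indexed by tuples of elements of [xmates d], and when there are k.+1 of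
   them it is moved up to the tuples enumerating all of them. *)
Definition lift k (f : seq 'I_n -> palg R n) t : palg R n :=
  [ffun d => if [&& valid X x t, size t == k.+1, all (xmate d) t & #|xmates d| == k.+1]
             then f (take k t) d else 0].

Lemma lift_chain k f : chain X x (Dsummand R X x) k.+1 (lift k f).
Proof.
split=> [t vt st|t t_out]; last first.
  apply/ffunP => d; rewrite !ffunE; case: ifP => // /and4P[vt /eqP st _ _].
  by rewrite vt st eqxx in t_out.
rewrite Dsummand_top => d; rewrite ffunE; case: ifP => [/and4P[_ _ t_xm full] _|]; last first.
  by rewrite eqxx.
by rewrite top_diag_xmates // sub_xmates // t_xm -card_gt0 (eqP full).
Qed.

Lemma dF_lift k f t d : valid X x t -> size t = k ->
  dF X x (lift k f) t d =
    if all (xmate d) t && (#|xmates d| == k.+1) then f t d else 0.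
Proof.
move=> vt st; rewrite /dF sum_ffunE.
have lift_rcons y : [&& y \in X, y != x & y \notin t] -> lift k f (rcons t y) d =
    if all (xmate d) t && (#|xmates d| == k.+1) && xmate d y then f t d else 0.
  move=> ty; rewrite ffunE valid_rconsE vt ty size_rcons st eqxx all_rcons.
  rewrite -cats1 -st take_size_cat //=.
  by case: (xmate d y) (all _ t) (_ == _) => [] [] [].
rewrite (eq_bigr _ lift_rcons); case: ifP => [/andP[t_xm full]|_]; last by rewrite big1.
rewrite -big_mkcondr /=; have t_sub : [set y in t] \subset xmates d by rewrite sub_xmates.
have /cards1P[w new_w] : #|xmates d :\: [set y in t]| == 1%N.
  by rewrite cardsDS // card_valid // st (eqP full) subSnn.
rewrite (eq_bigl (mem [set w])) ?big_set1 // => y; rewrite -new_w !inE.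
by case: (y \in X); case: (y == x); case: (y \in t); case: (xmate d y).
Qed.

Lemma aug_exact_Dsummand : aug_exact X x (Dsummand R X x).
Proof.
move=> k f f_chain f_cycle; exists (lift k f); split; first exact: lift_chain.
move=> t vt st; apply/Dsummand_ker.
suff residual d : (f t - dF X x (lift k f) t) d != 0 -> top_diag t d /\ Jset (Xminus t) d.
  by split=> d /residual[].
rewrite !ffunE dF_lift //; case: ifP => [_|not_full]; first by rewrite subrr eqxx.
rewrite subr0 => ftd; have td := chain_support f_chain vt st ftd; split=> //.
move: td not_full; rewrite top_diag_xmates // => /andP[t_sub _].
rewrite -sub_xmates // t_sub /= => /negbT not_full.
have k_le : (k <= #|xmates d|)%N by rewrite -st -card_valid // subset_leq_card.
case: (ltngtP #|xmates d| k.+1) not_full => // [few|many] _; last first.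
  by apply: Jset_many_xmates; rewrite ?st.
have full : xmates d = [set y in t].
  by apply/eqP; rewrite eq_sym eqEcard t_sub card_valid // st -ltnS few.
exact: (Jset_full_xmates f_chain f_cycle vt st full ftd).
Qed.

Lemma xmates_right_blocks d d' : same_right_blocks d' d -> xmates d' = xmates d.
Proof. by move=> dd'; apply/setP => y; rewrite !inE /xmate dd'. Qed.

Lemma top_diag_merged t d : valid X x t -> top_diag t d ->
  exists y1 y2, y1 != y2 /\ sameblk d (inr y1) (inr y2).
Proof.
move=> vt; rewrite top_diag_xmates // => /andP[_ /set0Pn[y]].
by rewrite !inE => /and3P[_ yx xy]; exists x, y; rewrite eq_sym yx.
Qed.

Lemma aug_exact_tensor1_Dsummand delta :
  aug_exact X x (fun s => tensor1 delta (Dsummand R X x s)).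
Proof.
move=> k f [f_top _] _; exists (fun=> 0); split.
  by split=> // t _ _; rewrite /= Dsummand_top => d; rewrite ffunE eqxx.
move=> t vt st; exists 0, (f t); split; last split.
- by apply/Dsummand_ker; split=> d; rewrite ffunE eqxx.
- move: (f_top t vt st); rewrite /= Dsummand_top; apply: Trel_spanD.
    by move=> d; apply: top_diag_merged.
  by move=> d d' dd'; rewrite !top_diag_xmates // (xmates_right_blocks dd').
- by rewrite /dF big1 ?subr0 ?add0r.
Qed.

End Resolution.

Theorem proposition4p11 (R : comPzRingType) (delta : R) (n : nat)
  (X : {set 'I_n}) (x : 'I_n) :
  x \in X ->
  aug_exact X x (Dsummand R X x) /\
  aug_exact X x (fun s => tensor1 delta (Dsummand R X x s)).
Proof.
(* Only X - {x} enters the complex. *)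
by move=> _; split; [exact: aug_exact_Dsummand | exact: aug_exact_tensor1_Dsummand].
Qed.
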